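(* Let $R>0$, $K>0$, $B_i>0$, $C_i\ge0$, $\alpha\in[0,1)$ and $c\ge0$ with $\alpha>0$ or $c>0$. For $(p,m)$ in $S=\{(p,m): p\ge0,\ m\ge0,\ p+m\le B_i\}$ define $$U_i(p,m)=\frac{\big((1-\alpha)p+m\big)R}{K+p+m}-c\,e^{-p}\,\mathbf{1}[p>0]-C_i\,\mathbf{1}[m>0].$$ Then every maximizer $(p^*,m^* )$ of $U_i$ over $S$ with $(p^*,m^* )\neq(0,0)$ satisfies $(p^*,m^* )\in\{(B_i,0),(0,B_i)\}$; i.e., a participating stakeholder's best response is to invest all its stakes either in the pool or for self-mining.
   Context: Setting: a proof-of-stake blockchain with one stake pool (own stake $\sigma>0$, announced cost parameter $c$ and fee $\alpha$) and $N$ stakeholders. Stakeholder $i$ has budget $B_i$ and operational cost $C_i$, and chooses $p$ stakes to invest in the pool and $m$ stakes for self-mining with $p+m\le B_i$; the block reward is $R$. $K$ is the total stake of the pool owner and all other stakeholders (held fixed), so the total network stake is $K+p+m$. Investing $p>0$ in the pool yields expected reward $\frac{p}{K+p+m}(1-\alpha)R-c\,e^{-p}$; self-mining with $m>0$ yields $\frac{m}{K+p+m}R-C_i$; not participating ($p=m=0$) yields $0$. *)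

From Stdlib Require Import Reals.
Open Scope R_scope.

Definition ind_pos (x : R) : R := if Rlt_dec 0 x then 1 else 0.

Definition feasible (B p m : R) : Prop := 0 <= p /\ 0 <= m /\ p + m <= B.

Definition utility (Rw K alpha c Ci p m : R) : R :=
  ((1 - alpha) * p + m) * Rw / (K + p + m)
  - c * exp (- p) * ind_pos p - Ci * ind_pos m.

Definition is_maximizer (Rw K alpha c Ci B ps ms : R) : Prop :=
  feasible B ps ms /\
  forall p m, feasible B p m ->
    utility Rw K alpha c Ci p m <= utility Rw K alpha c Ci ps ms.

(** A mixed strategy with [p, m > 0] is strictly beaten by self-mining the same
    total [p + m]: the reward does not drop (the fee only lowers it), the cost
    [C_i] is unchanged, and the pool cost [c e^(-p)] disappears, strictly so
    because [alpha > 0] or [c > 0]. A pure strategy is strictly beaten by its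
    full-budget version, since the share [x / (K + x)] strictly increases and
    [c e^(-p)] does not. *)

From Stdlib Require Import Reals Lra.
Open Scope R_scope.

Lemma ind_pos_gt0 (x : R) : 0 < x -> ind_pos x = 1.
Proof. intros hx; unfold ind_pos; destruct (Rlt_dec 0 x); lra. Qed.

Lemma ind_pos_0 : ind_pos 0 = 0.
Proof. unfold ind_pos; destruct (Rlt_dec 0 0); lra. Qed.

Lemma share_lt (K x y : R) :
  0 < K -> 0 <= x -> x < y -> x / (K + x) < y / (K + y).
Proof.
  intros hK hx hxy.
  assert (Hdiff : y / (K + y) - x / (K + x) = K * (y - x) / ((K + x) * (K + y)))
    by (field; lra).
  assert (0 < K * (y - x) / ((K + x) * (K + y))).
  { apply Rdiv_lt_0_compat; apply Rmult_lt_0_compat; lra. }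
  lra.
Qed.

Section Utility.

Variables (Rw K alpha c Ci : R).
Hypotheses (hR : 0 < Rw) (hK : 0 < K) (hc : 0 <= c).

Let U := utility Rw K alpha c Ci.

Lemma utility_pool (p : R) :
  0 < p -> U p 0 = (1 - alpha) * Rw * (p / (K + p)) - c * exp (- p).
Proof.
  intros hp; unfold U, utility.
  rewrite (ind_pos_gt0 p hp), ind_pos_0.
  field; lra.
Qed.

Lemma utility_solo (m : R) :
  0 < m -> U 0 m = Rw * (m / (K + m)) - Ci.
Proof.
  intros hm; unfold U, utility.
  rewrite (ind_pos_gt0 m hm), ind_pos_0.
  field; lra.
Qed.

Lemma utility_pool_lt (p q : R) :
  alpha < 1 -> 0 < p -> p < q -> U p 0 < U q 0.
Proof.
  intros ha1 hp hpq.
  rewrite (utility_pool p hp), (utility_pool q) by lra.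
  assert (Hreward : (1 - alpha) * Rw * (p / (K + p)) < (1 - alpha) * Rw * (q / (K + q))).
  { apply Rmult_lt_compat_l; [apply Rmult_lt_0_compat; lra | apply share_lt; lra]. }
  assert (Hcost : c * exp (- q) <= c * exp (- p)).
  { apply Rmult_le_compat_l; [lra | apply Rlt_le, exp_increasing; lra]. }
  lra.
Qed.

Lemma utility_solo_lt (m q : R) : 0 < m -> m < q -> U 0 m < U 0 q.
Proof.
  intros hm hmq.
  rewrite (utility_solo m hm), (utility_solo q) by lra.
  assert (Rw * (m / (K + m)) < Rw * (q / (K + q))).
  { apply Rmult_lt_compat_l; [lra | apply share_lt; lra]. }
  lra.
Qed.

Lemma utility_mixed_lt (p m : R) :
  0 <= alpha -> 0 < alpha \/ 0 < c -> 0 < p -> 0 < m -> U p m < U 0 (p + m).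
Proof.
  intros ha0 hac hp hm.
  rewrite (utility_solo (p + m)) by lra.
  unfold U, utility; rewrite (ind_pos_gt0 p hp), (ind_pos_gt0 m hm).
  assert (Hreward : ((1 - alpha) * p + m) * Rw / (K + p + m)
                    = Rw * ((p + m) / (K + (p + m))) - alpha * p * Rw / (K + p + m))
    by (field; lra).
  assert (Hexp : 0 < exp (- p)) by apply exp_pos.
  assert (Hfee : 0 <= alpha * p * Rw / (K + p + m)).
  { apply Rle_mult_inv_pos; [repeat apply Rmult_le_pos | ]; lra. }
  assert (Hcost : 0 <= c * exp (- p)) by (apply Rmult_le_pos; lra).
  rewrite Hreward.
  destruct hac as [ha | hc'].
  - assert (0 < alpha * p * Rw / (K + p + m)).
    { apply Rdiv_lt_0_compat; [repeat apply Rmult_lt_0_compat | ]; lra. }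
    lra.
  - assert (0 < c * exp (- p)) by (apply Rmult_lt_0_compat; lra).
    lra.
Qed.

End Utility.

Theorem theorem3 (Rw K B Ci alpha c : R)
  (hR : 0 < Rw) (hK : 0 < K) (hB : 0 < B) (hC : 0 <= Ci)
  (ha0 : 0 <= alpha) (ha1 : alpha < 1) (hc : 0 <= c)
  (hac : 0 < alpha \/ 0 < c)
  (ps ms : R)
  (hmax : is_maximizer Rw K alpha c Ci B ps ms)
  (hnz : ~ (ps = 0 /\ ms = 0)) :
  (ps = B /\ ms = 0) \/ (ps = 0 /\ ms = B).
Proof.
  destruct hmax as [[hp [hm hpm]] hbest].
  destruct (Rle_lt_or_eq_dec 0 ps hp) as [hp' | <-];
  destruct (Rle_lt_or_eq_dec 0 ms hm) as [hm' | <-].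
  - exfalso.
    assert (Hle := hbest 0 (ps + ms) ltac:(unfold feasible; lra)).
    assert (Hlt := utility_mixed_lt Rw K alpha c Ci hR hK hc ps ms ha0 hac hp' hm').
    lra.
  - left; split; [|reflexivity].
    destruct (Rlt_or_le ps B) as [hlt | hge]; [exfalso | lra].
    assert (Hle := hbest B 0 ltac:(unfold feasible; lra)).
    assert (Hlt := utility_pool_lt Rw K alpha c Ci hR hK hc ps B ha1 hp' hlt).
    lra.
  - right; split; [reflexivity|].
    destruct (Rlt_or_le ms B) as [hlt | hge]; [exfalso | lra].
    assert (Hle := hbest 0 B ltac:(unfold feasible; lra)).
    assert (Hlt := utility_solo_lt Rw K alpha c Ci hR hK ms B hm' hlt).
    lra.
  - exfalso; tauto.
Qed.
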